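(* Let $G$ be a finite simple graph on $[d]$. Then $L_G : x_{\emptyset}^{\infty}=J_G : x_{\emptyset}^{\infty}=\langle [I_G]_2\rangle : x_{\emptyset}^{\infty}=I_G.$
   Context: A stable set of $G$ is a subset of $[d]$ with no edge of $G$ (including $\emptyset$ and singletons); $S(G)$ is the set of stable sets; $R[G]=\mathbb{K}[x_S : S\in S(G)]$ over a field $\mathbb{K}$, all variables of degree $1$. $I_G$ is the kernel of $\pi:R[G]\to\mathbb{K}[t_1,\dots,t_d,s]$, $\pi(x_S)=s\prod_{j\in S}t_j$. $\langle [I_G]_2\rangle$ is the ideal generated by the degree-$2$ homogeneous elements of $I_G$. $J_G$ is the ideal generated by all binomials $x_{S_1}x_{S_2}-x_{S_3}x_{S_4}$ with $S_i\in S(G)$, $S_1\cap S_2=S_3\cap S_4=\emptyset$, $S_1\cup S_2=S_3\cup S_4$ (i.e. ${\bf x}_f-{\bf x}_g$ for $2$-colorings $f,g$ of a common induced subgraph, where ${\bf x}_f=x_{f^{-1}(1)}x_{f^{-1}(2)}$). $L_G=\langle x_{S\setminus\{i\}}x_{\{i\}}-x_Sx_\emptyset : i\in S\in S(G),\ |S|\ge2\rangle$. For an ideal $I$ and polynomial $h$, $I:h^\infty=\{p : h^np\in I \text{ for some } n>0\}$. *)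

From HB Require Import structures.
From mathcomp Require Import all_boot all_order all_algebra.
From mathcomp Require Import mpoly.
Set Implicit Arguments. Unset Strict Implicit. Unset Printing Implicit Defensive.
Import Order.TTheory GRing.Theory.
Local Open Scope ring_scope.

Definition ideal_gen (R : comNzRingType) (P : R -> Prop) : R -> Prop :=
  fun p => exists s : seq (R * R),
      (forall x, x \in s -> P x.2) /\ p = \sum_(x <- s) x.1 * x.2.

Definition saturation (R : comNzRingType) (I : R -> Prop) (h : R) : R -> Prop :=
  fun p => exists n : nat, (0 < n)%N /\ I (h ^+ n * p).

Definition simple_graph (d : nat) (e : rel 'I_d) : Prop :=
  irreflexive e /\ ssrbool.symmetric e.

Definition is_stable (d : nat) (e : rel 'I_d) (S : {set 'I_d}) : bool :=
  [forall i in S, forall j in S, ~~ e i j].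

Definition stables (d : nat) (e : rel 'I_d) : {set {set 'I_d}} :=
  [set S | is_stable e S].

Lemma set0_stable (d : nat) (e : rel 'I_d) : (set0 : {set 'I_d}) \in stables e.
Proof.
rewrite inE; apply/forallP => i; apply/implyP; by rewrite inE.
Qed.

Definition nvar (d : nat) (e : rel 'I_d) : nat := #|stables e|.

(* R[G] = K[x_S : S \in S(G)] *)
Definition RG (K : fieldType) (d : nat) (e : rel 'I_d) := {mpoly K[nvar e]}.

(* index of the variable x_S (meaningful for stable S) *)
Definition vidx (d : nat) (e : rel 'I_d) (S : {set 'I_d}) : 'I_(nvar e) :=
  enum_rank_in (set0_stable e) S.

Definition xvar (K : fieldType) (d : nat) (e : rel 'I_d) (S : {set 'I_d})
  : RG K e := 'X_(vidx e S).

(* target ring K[t_1..t_d, s]: t_j = 'X_(j), s = 'X_(d) *)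
Definition tvar (K : fieldType) (d : nat) (j : 'I_d) : {mpoly K[d.+1]} :=
  'X_(widen_ord (leqnSn d) j).
Definition svar (K : fieldType) (d : nat) : {mpoly K[d.+1]} := 'X_(ord_max).

Definition pi_img (K : fieldType) (d : nat) (e : rel 'I_d) (i : 'I_(nvar e))
  : {mpoly K[d.+1]} :=
  svar K d * \prod_(j in (enum_val i : {set 'I_d})) tvar K j.

Definition piG (K : fieldType) (d : nat) (e : rel 'I_d) (p : RG K e)
  : {mpoly K[d.+1]} :=
  mmap (fun c : K => c%:MP) (@pi_img K d e) p.

Definition IG (K : fieldType) (d : nat) (e : rel 'I_d) : RG K e -> Prop :=
  fun p => piG p = 0.

Definition IG2 (K : fieldType) (d : nat) (e : rel 'I_d) : RG K e -> Prop :=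
  ideal_gen (fun p : RG K e => IG p /\ p \is @ishomog1 _ K 2 mdeg).

Definition JG (K : fieldType) (d : nat) (e : rel 'I_d) : RG K e -> Prop :=
  ideal_gen (fun p : RG K e => exists S1 S2 S3 S4 : {set 'I_d},
    [/\ [/\ S1 \in stables e, S2 \in stables e, S3 \in stables e
          & S4 \in stables e],
        S1 :&: S2 = set0, S3 :&: S4 = set0, S1 :|: S2 = S3 :|: S4
      & p = xvar K e S1 * xvar K e S2 - xvar K e S3 * xvar K e S4]).

Definition LG (K : fieldType) (d : nat) (e : rel 'I_d) : RG K e -> Prop :=
  ideal_gen (fun p : RG K e => exists (S : {set 'I_d}) (i : 'I_d),
    [/\ S \in stables e, i \in S, (2 <= #|S|)%N
      & p = xvar K e (S :\ i) * xvar K e [set i] - xvar K e S * xvar K e set0]).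

From HB Require Import structures.
From mathcomp Require Import all_boot all_order all_algebra.
From mathcomp Require Import ssrcomplements mpoly.
From mathcomp Require Import ring.
Set Implicit Arguments. Unset Strict Implicit. Unset Printing Implicit Defensive.
Import Order.TTheory GRing.Theory.
Local Open Scope ring_scope.

(* The generators of L_G, J_G and <[I_G]_2> all lie in I_G, the kernel of a
   map into a domain sending x_0 to s <> 0, so all three saturations lie in
   I_G; moreover L_G <= J_G <= <[I_G]_2>.  Conversely, let rho be the map
   t_j |-> x_{j}, s |-> x_0.  Peeling off one element of S at a time with the
   generators of L_G gives x_0^|S| x_S = x_0 prod_(j in S) x_{j} = rho (pi x_S)
   modulo L_G, hence x_0^(w m) x^m = rho (pi x^m) for every monomial, where
   w m is the t-degree of pi x^m.  For p in I_G and N >= w m on the support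
   of p, this gives x_0^N p = Lambda (pi p) = 0 modulo L_G, where Lambda is
   the K-linear map sending a monomial t^a s^b to x_0^(N - |a|) rho (t^a s^b). *)

Section IdealGen.
Variables (R : comNzRingType) (P : R -> Prop).

Lemma ideal_gen0 : ideal_gen P 0.
Proof. by exists [::]; rewrite big_nil. Qed.

Lemma ideal_gen_gen a : P a -> ideal_gen P a.
Proof.
move=> Pa; exists [:: (1, a)]; split; last by rewrite big_seq1 mul1r.
by move=> x; rewrite inE => /eqP ->.
Qed.

Lemma ideal_genD a b : ideal_gen P a -> ideal_gen P b -> ideal_gen P (a + b).
Proof.
move=> [s1 [P1 ->]] [s2 [P2 ->]]; exists (s1 ++ s2); split; last by rewrite big_cat.
by move=> x; rewrite mem_cat => /orP [/P1|/P2].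
Qed.

Lemma ideal_genMl r a : ideal_gen P a -> ideal_gen P (r * a).
Proof.
move=> [s [Ps ->]]; exists [seq (r * x.1, x.2) | x <- s]; split.
  by move=> x /mapP [y /Ps Py ->].
by rewrite big_map mulr_sumr; apply: eq_bigr => x _; rewrite mulrA.
Qed.

Lemma ideal_gen_sum (I : eqType) (r : seq I) (F : I -> R) :
  (forall i, i \in r -> ideal_gen P (F i)) -> ideal_gen P (\sum_(i <- r) F i).
Proof.
elim: r => [|i r IHr] IF; first by rewrite big_nil; apply: ideal_gen0.
rewrite big_cons; apply: ideal_genD; first by apply: IF; rewrite mem_head.
by apply: IHr => j rj; apply: IF; rewrite inE rj orbT.
Qed.

Lemma ideal_gen_congrM a b c d :
  ideal_gen P (a - b) -> ideal_gen P (c - d) -> ideal_gen P (a * c - b * d).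
Proof.
have -> : a * c - b * d = c * (a - b) + b * (c - d) by ring.
by move=> Iab Icd; apply: ideal_genD; apply: ideal_genMl.
Qed.

Lemma ideal_gen_congrX a b k : ideal_gen P (a - b) -> ideal_gen P (a ^+ k - b ^+ k).
Proof.
move=> Iab; elim: k => [|k IHk]; first by rewrite !expr0 subrr; apply: ideal_gen0.
by rewrite !exprS; apply: ideal_gen_congrM.
Qed.

Lemma ideal_gen_congr_prod (I : Type) (r : seq I) (F G : I -> R) :
  (forall i, ideal_gen P (F i - G i)) ->
  ideal_gen P (\prod_(i <- r) F i - \prod_(i <- r) G i).
Proof.
move=> IFG; elim: r => [|i r IHr]; first by rewrite !big_nil subrr; apply: ideal_gen0.
by rewrite !big_cons; apply: ideal_gen_congrM.
Qed.

End IdealGen.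

Lemma sub_ideal_gen (R : comNzRingType) (P Q : R -> Prop) a :
  (forall x, P x -> Q x) -> ideal_gen P a -> ideal_gen Q a.
Proof. by move=> PQ [s [Ps ->]]; exists s; split => // x /Ps /PQ. Qed.

Lemma ideal_gen_kernel (R S : comNzRingType) (f : {rmorphism R -> S})
    (P : R -> Prop) a :
  (forall x, P x -> f x = 0) -> ideal_gen P a -> f a = 0.
Proof.
move=> Pf [s [Ps ->]]; rewrite rmorph_sum big_seq big1 // => x sx.
by rewrite rmorphM (Pf _ (Ps _ sx)) mulr0.
Qed.

Lemma sub_saturation (R : comNzRingType) (I J : R -> Prop) h p :
  (forall x, I x -> J x) -> saturation I h p -> saturation J h p.
Proof. by move=> IJ [n [n_gt0 /IJ]]; exists n. Qed.

Lemma saturation_kernel (R : comNzRingType) (S : idomainType)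
    (f : {rmorphism R -> S}) (I : R -> Prop) h p :
  f h != 0 -> (forall x, I x -> f x = 0) -> saturation I h p -> f p = 0.
Proof.
move=> fh_neq0 If [n [_ /If]]; rewrite rmorphM rmorphXn => /eqP.
by rewrite mulf_eq0 expf_eq0 (negbTE fh_neq0) andbF => /eqP.
Qed.

Section MLinear.
Variables (n : nat) (R : comNzRingType) (V : lmodType R) (F : 'X_{1..n} -> V).

Definition mlinear (p : {mpoly R[n]}) : V := \sum_(m <- msupp p) p@_m *: F m.

Lemma mlinearE p k : (msize p <= k)%N ->
  mlinear p = \sum_(m : 'X_{1..n < k}) p@_m *: F m.
Proof.
move=> le_pk; rewrite /mlinear (big_mksub 'X_{1..n < k}) ?msupp_uniq //=; last first.
  by move=> m /msize_mdeg_lt /leq_trans; apply.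
by rewrite big_rmcond //= => m /memN_msupp_eq0 ->; rewrite scale0r.
Qed.

Lemma mlinear_is_linear : linear mlinear.
Proof.
move=> c p q; set k := maxn (msize (c *: p + q)) (maxn (msize p) (msize q)).
rewrite !(@mlinearE _ k) ?geq_max ?leq_max ?leqnn ?orbT //.
rewrite scaler_sumr -big_split /=; apply: eq_bigr => m _.
by rewrite mcoeffD mcoeffZ scalerDl scalerA.
Qed.

HB.instance Definition _ :=
  GRing.isLinear.Build R {mpoly R[n]} V *:%R mlinear mlinear_is_linear.

Lemma mlinearX m : mlinear 'X_[m] = F m.
Proof. by rewrite /mlinear msuppX big_seq1 mcoeffX eqxx scale1r. Qed.

End MLinear.

HB.instance Definition _ (K : fieldType) d (e : rel 'I_d) :=
  GRing.RMorphism.copy (@piG K d e) (mmap (@mpolyC _ K) (@pi_img K d e)).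

Definition rho_img (K : fieldType) d (e : rel 'I_d) (k : 'I_d.+1) : RG K e :=
  if unlift ord_max k is Some j then xvar K e [set j] else xvar K e set0.

Definition rho (K : fieldType) d (e : rel 'I_d) (f : {mpoly K[d.+1]}) : RG K e :=
  mmap (@mpolyC _ K) (@rho_img K d e) f.

HB.instance Definition _ (K : fieldType) d (e : rel 'I_d) :=
  GRing.RMorphism.copy (@rho K d e) (mmap (@mpolyC _ K) (@rho_img K d e)).

Definition tdeg d (v : 'X_{1..d.+1}) : nat :=
  (\sum_(j < d) v (widen_ord (leqnSn d) j))%N.

Lemma tdeg0 d : tdeg (0 : 'X_{1..d.+1}) = 0%N.
Proof. by rewrite /tdeg big1 // => j _; rewrite mnm0E. Qed.

Lemma tdegD d (v w : 'X_{1..d.+1}) : tdeg (v + w) = (tdeg v + tdeg w)%N.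
Proof. by rewrite /tdeg -big_split; apply: eq_bigr => j _; rewrite mnmDE. Qed.

Lemma tdegMn d (v : 'X_{1..d.+1}) k : tdeg (v *+ k) = (tdeg v * k)%N.
Proof. by rewrite /tdeg big_distrl; apply: eq_bigr => j _; rewrite mulmnE. Qed.

Lemma tdegU_max d : tdeg (U_(ord_max) : 'X_{1..d.+1}) = 0%N.
Proof.
rewrite /tdeg big1 // => j _; rewrite mnm1E.
by apply/eqP; rewrite eqb0 -val_eqE /= neq_ltn ltn_ord orbT.
Qed.

Lemma tdegU_widen d (j : 'I_d) : tdeg U_(widen_ord (leqnSn d) j) = 1%N.
Proof.
rewrite /tdeg (bigD1 j) //= mnm1E eqxx big1 // => k kj.
by rewrite mnm1E; apply/eqP; rewrite eqb0 -val_eqE /= eq_sym.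
Qed.

Section StableSetRing.
Variables (K : fieldType) (d : nat) (e : rel 'I_d).
Hypothesis e_irr : irreflexive e.

Local Notation x0 := (xvar K e set0).
Implicit Types p : RG K e.

Lemma stable_subset (S T : {set 'I_d}) :
  S \in stables e -> T \subset S -> T \in stables e.
Proof.
rewrite !inE => /forall_inP Sst /subsetP TS; apply/forall_inP => i Ti.
by apply/forall_inP => j Tj; have /forall_inP := Sst _ (TS _ Ti); apply; apply: TS.
Qed.

Lemma stable_set1 i : [set i] \in stables e.
Proof.
rewrite inE; apply/forall_inP => a /set1P ->.
by apply/forall_inP => b /set1P ->; rewrite e_irr.
Qed.

Lemma enum_val_vidx S : S \in stables e -> enum_val (vidx e S) = S.
Proof. exact: enum_rankK_in. Qed.

Lemma xvar_enum_val i : xvar K e (enum_val i) = 'X_i.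
Proof. by rewrite /xvar /vidx enum_valK_in. Qed.

Lemma piG_xvar S : S \in stables e ->
  piG (xvar K e S) = svar K d * \prod_(j in S) tvar K j.
Proof.
move=> Sst.
have -> : piG (xvar K e S) = mmap (@mpolyC _ K) (@pi_img K d e) (xvar K e S) by [].
by rewrite mmapX mmap1U /pi_img enum_val_vidx.
Qed.

Lemma piG_x0_neq0 : piG x0 != 0.
Proof.
rewrite piG_xvar ?set0_stable // big_set0 mulr1.
apply/eqP => /(congr1 (mcoeff U_(ord_max))).
by rewrite mcoeffX eqxx mcoeff0 => /eqP; rewrite oner_eq0.
Qed.

Lemma piG_xvarM S1 S2 :
  S1 \in stables e -> S2 \in stables e -> S1 :&: S2 = set0 ->
  piG (xvar K e S1 * xvar K e S2) = svar K d ^+ 2 * \prod_(j in S1 :|: S2) tvar K j.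
Proof.
move=> S1st S2st S12; rewrite rmorphM /= !piG_xvar //.
have -> : \prod_(j in S1 :|: S2) tvar K j = \prod_(j in [predU S1 & S2]) tvar K j.
  by apply: eq_bigl => j; rewrite !inE.
rewrite bigU /=; last by rewrite -setI_eq0 S12.
by rewrite expr2; ring.
Qed.

Lemma LG_sub_JG p : LG p -> JG p.
Proof.
apply: sub_ideal_gen => _ [S [i [Sst Si _ ->]]].
exists (S :\ i), [set i], S, set0; split.
- split; rewrite ?set0_stable ?stable_set1 //.
  exact: stable_subset Sst (subD1set S i).
- by rewrite setIDAC setDIl setDv setI0.
- by rewrite setI0.
- by rewrite setU0 setUC setD1K.
- by [].
Qed.

Lemma JG_sub_IG2 p : JG p -> IG2 p.
Proof.
apply: sub_ideal_gen => _ [S1 [S2 [S3 [S4 [[? ? ? ?] S12 S34 S1234 ->]]]]].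
split; first by rewrite /IG rmorphB /= !piG_xvarM // S1234 subrr.
by rewrite rpredB // (@dhomogM _ _ _ 1 _ 1) // dhomogX; apply/eqP; apply: mdeg1.
Qed.

Lemma IG2_sub_IG p : IG2 p -> IG p.
Proof. by apply: ideal_gen_kernel => x []. Qed.

Lemma rho_svar : rho e (svar K d) = x0.
Proof. by rewrite /rho /svar mmapX mmap1U /rho_img unlift_none. Qed.

Lemma rho_tvar j : rho e (tvar K j) = xvar K e [set j].
Proof.
rewrite /rho /tvar mmapX mmap1U /rho_img.
have -> : widen_ord (leqnSn d) j = lift ord_max j.
  by apply: val_inj; rewrite /= /bump leqNgt ltn_ord.
by rewrite liftK.
Qed.

Lemma rho_piG_xvar S : S \in stables e ->
  rho e (piG (xvar K e S)) = x0 * \prod_(j in S) xvar K e [set j].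
Proof.
move=> Sst; rewrite piG_xvar // rmorphM rmorph_prod /= rho_svar.
by under eq_bigr do rewrite rho_tvar.
Qed.

Lemma LG_xvar_congr S : S \in stables e ->
  LG (x0 ^+ #|S| * xvar K e S - rho e (piG (xvar K e S))).
Proof.
move=> Sst; rewrite rho_piG_xvar //; move: Sst.
move cardS: #|S| => k; elim: k S cardS => [|k IHk] S cardS Sst.
  move/eqP: cardS; rewrite cards_eq0 => /eqP ->.
  by rewrite big_set0 expr0 mul1r mulr1 subrr; apply: ideal_gen0.
have /set0Pn [i Si] : S != set0 by rewrite -card_gt0 cardS.
set S' := S :\ i.
have S'st : S' \in stables e by apply: stable_subset Sst (subD1set S i).
have cardS' : #|S'| = k by move: cardS; rewrite (cardsD1 i S) Si => -[].
have gen_i : LG (xvar K e S' * xvar K e [set i] - xvar K e S * x0).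
  have [S'0 | [j S'j]] := set_0Vmem S'.
    have -> : S = [set i] by rewrite -(setD1K Si) -/S' S'0 setU0.
    by rewrite S'0 mulrC subrr; apply: ideal_gen0.
  apply: ideal_gen_gen; exists S, i; split => //.
  by rewrite cardS ltnS -cardS' card_gt0; apply/set0Pn; exists j.
have -> : \prod_(j in S) xvar K e [set j]
    = xvar K e [set i] * \prod_(j in S') xvar K e [set j].
  by rewrite (bigD1 i Si); congr (_ * _); apply: eq_bigl => j; rewrite !inE andbC.
have -> : x0 ^+ k.+1 * xvar K e S
      - x0 * (xvar K e [set i] * \prod_(j in S') xvar K e [set j])
  = - x0 ^+ k * (xvar K e S' * xvar K e [set i] - xvar K e S * x0)
    + xvar K e [set i] * (x0 ^+ k * xvar K e S' - x0 * \prod_(j in S') xvar K e [set j]).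
  by rewrite exprS; ring.
by apply: ideal_genD; apply: ideal_genMl => //; apply: IHk.
Qed.

Definition wt (m : 'X_{1..nvar e}) : nat :=
  (\sum_(i < nvar e) #|enum_val i| * m i)%N.

Lemma LG_monomial_congr m : LG (x0 ^+ wt m * 'X_[m] - rho e (piG 'X_[m])).
Proof.
rewrite mpolyXE_id !rmorph_prod /wt -prodrXr.
under eq_bigr do rewrite exprM.
rewrite -big_split /=; apply: ideal_gen_congr_prod => i.
rewrite !rmorphXn -exprMn; apply: ideal_gen_congrX.
by rewrite -xvar_enum_val; apply: LG_xvar_congr; apply: enum_valP.
Qed.

Definition pi_exp (i : 'I_(nvar e)) : 'X_{1..d.+1} :=
  (U_(ord_max) + \sum_(j in enum_val i) U_(widen_ord (leqnSn d) j))%MM.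

Definition pi_mnm (m : 'X_{1..nvar e}) : 'X_{1..d.+1} :=
  (\sum_(i < nvar e) pi_exp i *+ m i)%MM.

Lemma piG_X m : piG ('X_[m] : RG K e) = 'X_[pi_mnm m].
Proof.
rewrite mpolyXE_id rmorph_prod /pi_mnm -mprodXnE; apply: eq_bigr => i _.
rewrite rmorphXn /= -xvar_enum_val piG_xvar ?enum_valP // mpolyXD.
by rewrite (big_morph (@mpolyX _ K) (@mpolyXD _ K) (@mpolyX0 _ K)).
Qed.

Lemma piGC c : piG (c%:MP : RG K e) = c%:MP.
Proof. exact: mmapC. Qed.

Lemma piGE p : piG p = \sum_(m <- msupp p) p@_m *: 'X_[pi_mnm m].
Proof.
rewrite {1}(mpolyE p) rmorph_sum; apply: eq_bigr => m _.
by rewrite -mul_mpolyC rmorphM /= piGC piG_X mul_mpolyC.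
Qed.

Lemma tdeg_pi_exp i : tdeg (pi_exp i) = #|enum_val i|.
Proof.
rewrite /pi_exp tdegD (big_morph _ (@tdegD d) (@tdeg0 d)) tdegU_max add0n.
by under eq_bigr do rewrite tdegU_widen; rewrite sum1_card.
Qed.

Lemma tdeg_pi_mnm m : tdeg (pi_mnm m) = wt m.
Proof.
rewrite /pi_mnm (big_morph _ (@tdegD d) (@tdeg0 d)) /wt.
by apply: eq_bigr => i _; rewrite tdegMn tdeg_pi_exp.
Qed.

Lemma IG_sub_saturation_LG p : IG p -> saturation (@LG K d e) x0 p.
Proof.
move=> Ip; set N := \max_(m <- msupp p) wt m.
pose F v := x0 ^+ (N - tdeg v) * rho e 'X_[v].
have congr_p : LG (x0 ^+ N * p - mlinear F (piG p)).
  rewrite piGE [mlinear F _]linear_sum {1}(mpolyE p) mulr_sumr -sumrB.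
  apply: ideal_gen_sum => m msupp_m.
  rewrite linearZ /= mlinearX -scalerAr -scalerBr -mul_mpolyC; apply: ideal_genMl.
  have wt_le : (wt m <= N)%N.
    exact: (@leq_bigmax_seq _ _ xpredT wt m msupp_m isT).
  rewrite /F tdeg_pi_mnm -piG_X -{1}(subnK wt_le) exprD -mulrA -mulrBr.
  by apply: ideal_genMl; apply: LG_monomial_congr.
exists N.+1; split => //; rewrite exprS -mulrA; apply: ideal_genMl.
by move: congr_p; rewrite Ip linear0 subr0.
Qed.

End StableSetRing.

Unset Implicit Arguments.
Theorem lemma4p1 (K : fieldType) (d : nat) (e : rel 'I_d) :
  simple_graph e ->
  (forall p : RG K e,
      saturation (@LG K d e) (@xvar K d e set0) p <-> @IG K d e p) /\
  (forall p : RG K e,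
      saturation (@JG K d e) (@xvar K d e set0) p <-> @IG K d e p) /\
  (forall p : RG K e,
      saturation (@IG2 K d e) (@xvar K d e set0) p <-> @IG K d e p).
Proof.
move=> [e_irr _].
have saturation_IG (J : RG K e -> Prop) :
    (forall p, LG p -> J p) -> (forall p, J p -> IG p) ->
    forall p, saturation J (xvar K e set0) p <-> IG p.
  move=> LJ JI p; split; first exact: saturation_kernel (piG_x0_neq0 K e) JI.
  by move=> /IG_sub_saturation_LG; apply: sub_saturation.
split; last split; apply: saturation_IG => p //.
- by move/(LG_sub_JG e_irr)/JG_sub_IG2/IG2_sub_IG.
- exact: LG_sub_JG.
- by move/JG_sub_IG2/IG2_sub_IG.
- by move/(LG_sub_JG e_irr)/JG_sub_IG2.
- exact: IG2_sub_IG.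
Qed.
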